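(* Let $n,k\ge s$ and let $\lambda$ be a partition with at most $k-s$ parts. Then $$R^{n-1}_{k-s}\circ\cdots\circ R^{s+1}_{k-s}\circ R^{s}_{k-s}\big(\Delta_\lambda(c_1,\ldots,c_s)\big)=\sum_{S\in\binom{[n]}{s}}\frac{\Delta_\lambda(\gamma_S)\cdot\prod_{i\in\bar S}\gamma_i^k}{\prod_{i\in\bar S}\prod_{j\in S}(\gamma_i-\gamma_j)},$$ where $\binom{[n]}{s}$ is the set of $s$-element subsets of $[n]=\{1,\ldots,n\}$, $\bar S=[n]\setminus S$, and the left side is regarded as a symmetric polynomial in $\gamma_1,\ldots,\gamma_n$ with $c_i$ the $i$-th elementary symmetric polynomial.
   Context: In $\mathbb{Z}[c_1,\ldots,c_m]$, $\Delta_\lambda(c_1,\ldots,c_m)=\det(c_{\lambda_i+j-i})_{i,j}$ with $c_0=1$, $c_r=0$ for $r<0$ or $r>m$. When $c_1,\ldots,c_m$ are identified with the elementary symmetric polynomials in variables $\gamma_1,\ldots,\gamma_m$, $\Delta_\lambda(\gamma_S)$ denotes $\Delta_\lambda(c_1,\ldots,c_s)$ expressed in $\gamma_1,\ldots,\gamma_s$ with $\gamma_i$, $i\in S$, substituted for them. The width of a monomial in the $c_i$ is its number of factors; the width of a polynomial is the maximum width of its terms. $P^m_w$ is the space of polynomials of width $\le w$ in $\mathbb{Z}[c_1,\ldots,c_m]$; every $p\in P^m_w$ has a unique expression $p=\sum_\lambda a_\lambda\Delta_\lambda(c_1,\ldots,c_m)$ over partitions $\lambda=(\lambda_1,\ldots,\lambda_w)$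 with at most $w$ nonzero parts (padded by zeros). The raising operator $R^m_w:P^m_w\to P^{m+1}_w$ is $\sum_\lambda a_\lambda\Delta_\lambda(c_1,\ldots,c_m)\mapsto\sum_\lambda a_\lambda\Delta_{(\lambda_1+1,\ldots,\lambda_w+1)}(c_1,\ldots,c_{m+1})$. When $n=s$ the composition on the left is the identity. *)

From HB Require Import structures.
From mathcomp Require Import all_boot all_order all_algebra.
From mathcomp Require Import fraction.
From mathcomp Require Export mpoly.
Set Implicit Arguments. Unset Strict Implicit. Unset Printing Implicit Defensive.
Import GRing.Theory.
Local Open Scope ring_scope.

(* Entry c_{a - i} of the Jacobi-Trudi type matrix, with c_0 = 1 and
   c_r = 0 for r < 0.  (c_r = 0 for r > m is taken care of by the choice of c.) *)
Definition centry (R : ringType) (c : nat -> R) (a i : nat) : R :=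
  if (a < i)%N then 0 else if (a - i == 0)%N then 1 else c (a - i)%N.

(* Delta_lambda(c) = det (c_{lambda_i + j - i})_{i,j}, lambda given as a
   w-tuple of parts (padded by zeros); indices i,j are 0-based here,
   which does not change lambda_i + j - i. *)
Definition Delta (R : comRingType) (w : nat) (c : nat -> R) (lam : w.-tuple nat) : R :=
  \det (\matrix_(i < w, j < w) centry c (tnth lam i + j)%N i).

(* the variables c_1, ..., c_m of Z[c_1,...,c_m] : c_r = 'X_(r-1) for 1 <= r <= m,
   c_r = 0 for r > m (the value at r = 0 is never used by centry). *)
Definition cvar (m r : nat) : {mpoly int[m]} := \sum_(i < m | i.+1 == r) 'X_i.

Definition is_partition (w : nat) (lam : w.-tuple nat) : bool := sorted geq lam.

Definition raise (w : nat) (lam : w.-tuple nat) : w.-tuple nat := map_tuple succn lam.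

(* Graph of the raising operator R^m_w : P^m_w -> P^{m+1}_w:
   q = R^m_w p  iff  p = sum a_lambda Delta_lambda(c_1..c_m) and
   q = sum a_lambda Delta_{lambda+1}(c_1..c_{m+1}) for some finitely supported
   family of integer coefficients indexed by partitions with at most w parts. *)
Definition raising_rel (w m : nat) (p : {mpoly int[m]}) (q : {mpoly int[m.+1]}) : Prop :=
  exists (L : seq (w.-tuple nat)) (a : w.-tuple nat -> int),
    all (@is_partition w) L /\
    p = \sum_(l <- L) a l *: Delta (cvar m) l /\
    q = \sum_(l <- L) a l *: Delta (cvar m.+1) (raise l).

Definition esymS (n : nat) (S : {set 'I_n}) (r : nat) : {mpoly int[n]} :=
  \sum_(T : {set 'I_n} | (T \subset S) && (#|T| == r)) \prod_(j in T) 'X_j.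

Definition elem_tuple (n : nat) : n.-tuple {mpoly int[n]} :=
  [tuple mesym n int i.+1 | i < n].

Notation "x %:F" := (@FracField.tofrac _ x).

(* Write e_r(A) for the r-th elementary symmetric function of the x_j, j in A,
   and d_A(i) = \prod_(j in A, j != i) (x_i - x_j).  Lagrange interpolation at
   the points x_i, i in A, gives

     \sum_(i in A) x_i^(#|A| - 1) / d_A(i) = 1,
     \sum_(i in A) x_i^#|A| / d_A(i) * e_r(A \ i) = e_(r+1)(A).

   Using the second identity on the last column of the Jacobi-Trudi matrix of
   lambda + 1, and e_(t+1)(A) = e_(t+1)(A \ i) + x_i e_t(A \ i) on the others,

     Delta_(lambda+1)(e(A)) = \sum_(i in A) x_i^(w + #|A| - 1) / d_A(i) * Delta_lambda(e(A \ i)),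

   where w is the number of parts.  Being linear in Delta_lambda, this says that
   evaluating R(q) at e(A) is the same weighted sum of evaluations of q at
   e(A \ i); hence the left-hand side is Delta_(lambda + n - s)(e([n])).
   Iterating the identity down to the s-subsets S of [n], the first identity
   applied to A \ S collapses the sum over the orders in which the elements of
   A \ S are removed, leaving the weights of the right-hand side.  Nothing uses
   that lambda (or any index of the raising relation) is a partition. *)

From HB Require Import structures.
From mathcomp Require Import all_boot all_order all_algebra.
From mathcomp Require Import fraction mpoly.
From mathcomp Require Import ring zify.
Import GRing.Theory.
Local Open Scope ring_scope.
Set Implicit Arguments. Unset Strict Implicit. Unset Printing Implicit Defensive.

Lemma cardsD1_pred (T : finType) (A : {set T}) x : x \in A -> #|A :\ x| = #|A|.-1.
Proof. by move=> xA; rewrite (cardsD1 x A) xA. Qed.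

Lemma expand_det_col_agree (R : comNzRingType) m (A B : 'M[R]_m) j :
  (forall a c, c != j -> A a c = B a c) ->
  \det B = \sum_a B a j * cofactor A a j.
Proof.
move=> eqAB; rewrite (expand_det_col B j); apply: eq_bigr => a _.
congr (_ * (_ * \det _)); apply/matrixP => b c; rewrite !mxE eqAB //.
by rewrite eq_sym neq_lift.
Qed.

Definition bidiag_mx (R : nzRingType) w (y : R) : 'M[R]_w.+1 :=
  \matrix_(b, c) if (c < w)%N then ((b == c.+1 :> nat)%:R + y * (b == c :> nat)%:R)
                 else (b == c :> nat)%:R.

Lemma det_bidiag_mx (R : comNzRingType) w (y : R) : \det (bidiag_mx w y) = y ^+ w.
Proof.
rewrite det_trig; last first.
  apply/is_trig_mxP => b c ltbc.
  by rewrite mxE (ltn_eqF ltbc) (ltn_eqF (leqW ltbc)) mulr0 addr0; case: ifP.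
rewrite big_ord_recr /= !mxE ltnn eqxx mulr1.
rewrite (eq_bigr (fun=> y)) ?prodr_const ?card_ord // => b _.
by rewrite mxE /= ltn_ord eqxx ltn_eqF // mulr1 add0r.
Qed.

Lemma sum_ord_mul_nat_eq (R : nzSemiRingType) m (F : 'I_m -> R) j (ltjm : (j < m)%N) :
  \sum_(b < m) F b * (b == j :> nat)%:R = F (Ordinal ltjm).
Proof.
rewrite (bigD1 (Ordinal ltjm)) //= eqxx mulr1 big1 ?addr0 // => b neb.
rewrite (_ : (b == j :> nat) = false) ?mulr0 //.
by apply: contraNF neb => ebj; apply/eqP/val_inj/eqP.
Qed.

Definition Delta_mx (R : comNzRingType) w (c : nat -> R) (lam : w.-tuple nat) : 'M[R]_w :=
  \matrix_(i < w, j < w) centry c (tnth lam i + j) i.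

Section ElementarySymmetric.
Variables (R : comNzRingType) (n : nat) (x : 'I_n -> R).
Implicit Types (B T : {set 'I_n}) (i : 'I_n).

Definition esym_on (B : {set 'I_n}) (r : nat) : R :=
  \sum_(T : {set 'I_n} | (T \subset B) && (#|T| == r)) \prod_(j in T) x j.

Lemma esym_on0 B : esym_on B 0 = 1.
Proof.
rewrite /esym_on (bigD1 set0) /=; last by rewrite sub0set cards0.
rewrite big_set0 big1 ?addr0 // => T /andP[/andP[_ /eqP /cards0_eq ->]].
by rewrite eqxx.
Qed.

Lemma esym_on_gt_card B r : (#|B| < r)%N -> esym_on B r = 0.
Proof.
move=> ltBr; rewrite /esym_on big1 // => T /andP[sTB /eqP cT].
by move: (subset_leq_card sTB); rewrite cT leqNgt ltBr.
Qed.

Lemma esym_onD1 B i r : i \in B ->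
  esym_on B r.+1 = esym_on (B :\ i) r.+1 + x i * esym_on (B :\ i) r.
Proof.
move=> iB; rewrite /esym_on (bigID (fun T => i \in T)) /= addrC; congr (_ + _).
  by apply: eq_bigl => T; rewrite subsetD1 andbAC.
rewrite mulr_sumr (reindex_onto (fun T => i |: T) (fun T => T :\ i)) /=; last first.
  by move=> T /andP[_ iT]; rewrite setD1K.
apply: eq_big => [T|T /andP[/andP[/andP[_ _] _] /eqP <-]]; last first.
  by rewrite big_setU1 //= !inE eqxx.
rewrite setU11 andbT subUset sub1set iB /= subsetD1.
have [iT|iT] /= := boolP (i \in T).
  rewrite andbF; apply/negbTE/negP => /andP[_ /eqP /setP /(_ i)].
  by rewrite !inE eqxx iT.
by rewrite setU1K // eqxx !andbT cardsU1 iT.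
Qed.

Definition prodXsub (B : {set 'I_n}) : {poly R} := \prod_(j in B) ('X - (x j)%:P).

Lemma coef_prodXsub B m : (prodXsub B)`_m =
  if (m <= #|B|)%N then (-1) ^+ (#|B| - m) * esym_on B (#|B| - m) else 0.
Proof.
move: {2}#|B| (erefl #|B|) m => N; elim: N B => [|N IH] B cB m.
  move/eqP: cB; rewrite cards_eq0 => /eqP ->.
  by rewrite /prodXsub big_set0 coef1 cards0; case: m => [|m] //; rewrite esym_on0 mulr1.
have [i iB] : exists i, i \in B by apply/set0Pn; rewrite -card_gt0 cB.
have cBi : #|B :\ i| = N by apply/eqP; rewrite -eqSS -cB (cardsD1 i B) iB.
rewrite /prodXsub (big_setD1 i iB) /= mulrBl coefB coefXM coefCM.
rewrite -!/(prodXsub _) !IH // cB.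
case: m => [|m] /=.
  rewrite !subn0 sub0r cBi (esym_onD1 _ iB) [esym_on _ N.+1]esym_on_gt_card ?cBi //.
  by rewrite add0r exprS mulN1r mulNr mulrCA.
rewrite cBi ltnS subSS; case: (ltngtP m N) => [ltmN|ltNm|->].
- by rewrite -(subnSK ltmN) (esym_onD1 _ iB) exprS; ring.
- by rewrite mulr0 subr0.
- by rewrite subnn !esym_on0 mulr0 subr0.
Qed.

Lemma centry_esym_on B t a : (a <= t)%N -> centry (esym_on B) t a = esym_on B (t - a).
Proof.
by move=> leat; rewrite /centry ltnNge leat /=; case: eqP => [->|//]; rewrite esym_on0.
Qed.

Lemma centry_esym_onD1 B i t a : i \in B ->
  centry (esym_on B) t.+1 a =
  centry (esym_on (B :\ i)) t.+1 a + x i * centry (esym_on (B :\ i)) t a.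
Proof.
move=> iB; have [ltta|leat] := ltnP t a.
  rewrite [centry _ t a]/centry ltta mulr0 addr0 /centry.
  by case: ltnP => // _; have -> : (t.+1 - a = 0)%N by lia.
by rewrite !centry_esym_on ?(leq_trans leat) // subSn // (esym_onD1 _ iB).
Qed.

Lemma Delta_mx_mul_bidiag B i w (lam : w.+1.-tuple nat) a c : i \in B ->
  (Delta_mx (esym_on (B :\ i)) lam *m bidiag_mx w (x i)) a c =
  if (c < w)%N then Delta_mx (esym_on B) (raise lam) a c
  else Delta_mx (esym_on (B :\ i)) lam a c.
Proof.
move=> iB; rewrite !mxE; under eq_bigr do rewrite !mxE.
case: ifP => ltcw; last by rewrite (sum_ord_mul_nat_eq _ (ltn_ord c)).
under eq_bigr do rewrite mulrDr mulrCA.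
rewrite big_split -mulr_sumr /= (sum_ord_mul_nat_eq _ (ltcw : (c.+1 < w.+1)%N)).
rewrite (sum_ord_mul_nat_eq _ (ltn_ord c)) tnth_map addSn addnS.
by rewrite (centry_esym_onD1 _ _ iB).
Qed.

End ElementarySymmetric.

Section Lagrange.
Variables (K : fieldType) (n : nat) (x : 'I_n -> K).
Hypothesis x_inj : injective x.
Implicit Types (A B : {set 'I_n}) (i : 'I_n).
Local Notation esym_on := (esym_on x).
Local Notation prodXsub := (prodXsub x).

Definition lagrange_den A i : K := \prod_(j in A :\ i) (x i - x j).

Lemma lagrange_den_neq0 A i : lagrange_den A i != 0.
Proof.
apply/prodf_neq0 => j; rewrite !inE => /andP[ji _].
by rewrite subr_eq0 (inj_eq x_inj) eq_sym.
Qed.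

Lemma horner_prodXsub B y : (prodXsub B).[y] = \prod_(j in B) (y - x j).
Proof. by rewrite horner_prod; apply: eq_bigr => j _; rewrite hornerXsubC. Qed.

Lemma lagrange_interpolation A (f : {poly K}) : (size f <= #|A|)%N ->
  f = \sum_(i in A) (f.[x i] / lagrange_den A i) *: prodXsub (A :\ i).
Proof.
move=> sf; apply/eqP; rewrite -subr_eq0; set g := _ - _; apply: contraT => gnz.
have sg : (size g <= #|A|)%N.
  apply/leq_sizeP => j hj; rewrite coefB coef_sum (leq_sizeP _ _ sf) // sub0r.
  rewrite big1 ?oppr0 // => i iA; rewrite coefZ coef_prodXsub cardsD1_pred //.
  have A0 : (0 < #|A|)%N by apply/card_gt0P; exists i.
  by rewrite ifN ?mulr0 //; lia.
have uniq_pts : uniq [seq x i | i in A] by rewrite map_inj_uniq ?enum_uniq.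
have := max_poly_roots gnz _ uniq_pts; rewrite size_map -cardE ltnNge sg.
apply; apply/allP => _ /imageP[k kA ->].
rewrite /root /g hornerD hornerN horner_sum (bigD1 k) //= big1 => [|i /andP[iA ik]].
  by rewrite addr0 hornerZ horner_prodXsub divfK ?lagrange_den_neq0 // subrr.
rewrite hornerZ horner_prodXsub (bigD1 k) /= ?subrr ?mul0r ?mulr0 //.
by rewrite !inE eq_sym ik.
Qed.

(* Coefficient of 'X^(#|A|.-1 - p) in [lagrange_interpolation]. *)
Lemma sum_lagrange_esym A (f : {poly K}) p : (size f <= #|A|)%N -> (p < #|A|)%N ->
  \sum_(i in A) f.[x i] / lagrange_den A i * esym_on (A :\ i) p =
  (-1) ^+ p * f`_(#|A|.-1 - p).
Proof.
move=> sf ltpA; rewrite [in RHS](lagrange_interpolation sf) coef_sum mulr_sumr.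
apply: eq_bigr => i iA; rewrite coefZ coef_prodXsub cardsD1_pred // leq_subr.
have -> : (#|A|.-1 - (#|A|.-1 - p) = p)%N by lia.
by rewrite [RHS]mulrCA signrMK.
Qed.

Lemma sum_lagrange_pow_pred A : A != set0 ->
  \sum_(i in A) x i ^+ #|A|.-1 / lagrange_den A i = 1.
Proof.
rewrite -card_gt0 => A0.
have sf : (size ('X^(#|A|.-1) : {poly K}) <= #|A|)%N by rewrite size_polyXn prednK.
have := sum_lagrange_esym sf A0; rewrite subn0 expr0 mul1r coefXn eqxx /=.
by apply: etrans; apply: eq_bigr => i iA; rewrite hornerXn esym_on0 mulr1.
Qed.

Lemma sum_lagrange_pow_card A r :
  \sum_(i in A) x i ^+ #|A| / lagrange_den A i * esym_on (A :\ i) r =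
  esym_on A r.+1.
Proof.
have [leAr|ltrA] := leqP #|A| r.
  rewrite esym_on_gt_card // big1 // => i iA.
  by rewrite esym_on_gt_card ?mulr0 // (leq_trans _ leAr) // (cardsD1 i A) iA.
set N := #|A|; have N0 : (0 < N)%N by rewrite (leq_ltn_trans (leq0n r)).
have sf : (size ('X^N - prodXsub A)%R <= N)%N.
  apply/leq_sizeP => j hj; rewrite coefB coefXn coef_prodXsub -/N.
  have [ltNj|->] : (N < j)%N \/ j = N by lia.
    by rewrite gtn_eqF // leqNgt ltNj subr0.
  by rewrite eqxx leqnn subnn expr0 mul1r esym_on0 subrr.
transitivity (\sum_(i in A) ('X^N - prodXsub A).[x i] / lagrange_den A i *
                                esym_on (A :\ i) r).
  apply: eq_bigr => i iA; rewrite hornerD hornerN hornerXn horner_prodXsub (bigD1 i) //=.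
  by rewrite subrr mul0r subr0.
rewrite sum_lagrange_esym // coefB coefXn coef_prodXsub -/N ifT; last by lia.
have -> : (N.-1 - r == N)%N = false by apply/negbTE; lia.
have -> : (N - (N.-1 - r) = r.+1)%N by lia.
by rewrite sub0r exprS mulN1r mulNr opprK signrMK.
Qed.

End Lagrange.

Section Raising.
Variables (K : fieldType) (n : nat) (x : 'I_n -> K).
Hypothesis x_inj : injective x.
Implicit Types (A S : {set 'I_n}) (i : 'I_n).
Local Notation esym_on := (esym_on x).
Local Notation lagrange_den := (lagrange_den x).

Lemma Delta_raise_esym_on A w (lam : w.-tuple nat) : A != set0 ->
  Delta (esym_on A) (raise lam) =
  \sum_(i in A)
    x i ^+ (w + #|A|.-1) / lagrange_den A i * Delta (esym_on (A :\ i)) lam.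
Proof.
move=> A0; case: w lam => [|w] lam.
  rewrite /Delta det_mx00 -(sum_lagrange_pow_pred x_inj A0).
  by apply: eq_bigr => i _; rewrite det_mx00 mulr1.
set N := Delta_mx (esym_on A) (raise lam).
have lastN a : N a ord_max = \sum_(i in A)
    x i ^+ #|A| / lagrange_den A i * Delta_mx (esym_on (A :\ i)) lam a ord_max.
  have leaw : (a <= tnth lam a + w)%N by have := ltn_ord a; lia.
  rewrite mxE tnth_map centry_esym_on /=; last by rewrite addSn leqW.
  rewrite addSn subSn // -(sum_lagrange_pow_card x_inj).
  by apply: eq_bigr => i _; rewrite mxE centry_esym_on.
transitivity (\sum_(i in A) x i ^+ #|A| / lagrange_den A i *
   \det (Delta_mx (esym_on (A :\ i)) lam *m bidiag_mx w (x i))).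
  rewrite /Delta -/N (expand_det_col _ ord_max).
  under eq_bigr do rewrite lastN mulr_suml.
  rewrite exchange_big; apply: eq_bigr => i iA.
  rewrite (@expand_det_col_agree _ _ N _ ord_max) ?mulr_sumr.
    by apply: eq_bigr => a _; rewrite Delta_mx_mul_bidiag // ltnn /cofactor !mulrA.
  move=> a c nec; rewrite Delta_mx_mul_bidiag // ifT // ltn_neqAle -ltnS ltn_ord andbT.
  by apply: contra nec => /eqP cw; apply/eqP/val_inj; rewrite /= cw.
apply: eq_bigr => i iA.
rewrite det_mulmx -/(Delta _ lam) det_bidiag_mx addSn -addnS prednK ?card_gt0 //.
by rewrite exprD; ring.
Qed.

Definition subset_weight k A S : K :=
  (\prod_(i in A :\: S) x i ^+ k) / \prod_(i in A :\: S) \prod_(j in S) (x i - x j).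

Lemma subset_weight_id k A : subset_weight k A A = 1.
Proof. by rewrite /subset_weight setDv !big_set0 divr1. Qed.

Lemma subset_weightD1 k A S i : i \in A :\: S ->
  subset_weight k A S =
  x i ^+ k / \prod_(j in S) (x i - x j) * subset_weight k (A :\ i) S.
Proof.
move=> iAS; rewrite /subset_weight setDDl setUC -setDDl !(big_setD1 i iAS) /= invfM.
by ring.
Qed.

Lemma lagrange_den_setD A S i : S \subset A -> i \in A :\: S ->
  lagrange_den A i = \prod_(j in S) (x i - x j) * lagrange_den (A :\: S) i.
Proof.
move=> sSA iAS; rewrite /lagrange_den -bigU /=; last first.
  by rewrite disjoints_subset; apply/subsetP => j jS; rewrite !inE jS andbF.
apply: eq_bigl => j; rewrite !inE; case: (eqVneq j i) => [->|_] /=.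
  by move: iAS; rewrite inE => /andP[/negbTE -> _].
by case: (boolP (j \in S)) => [/(subsetP sSA)->|].
Qed.

Lemma sum_subset_weight k A S : S \subset A -> S != A -> (#|S| <= k)%N ->
  \sum_(i in A :\: S)
    x i ^+ (k - #|S| + #|A|.-1) / lagrange_den A i * subset_weight k (A :\ i) S =
  subset_weight k A S.
Proof.
move=> sSA neSA leSk; set D := A :\: S.
have D0 : D != set0 by rewrite setD_eq0; apply: contra neSA => sAS; rewrite eqEsubset sSA.
have cardA : #|A| = (#|S| + #|D|)%N by rewrite cardsD (setIidPr sSA) subnKC ?subset_leq_card.
have -> : (k - #|S| + #|A|.-1 = k + #|D|.-1)%N by move: D0; rewrite -card_gt0; lia.
rewrite -[RHS]mulr1 -(sum_lagrange_pow_pred x_inj D0) mulr_sumr.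
apply: eq_bigr => i iD; rewrite (subset_weightD1 k iD) (lagrange_den_setD sSA iD).
by rewrite exprD invfM; ring.
Qed.

Lemma Delta_iter_raise_esym_on k s (lam : (k - s).-tuple nat) d A :
  (s <= k)%N -> #|A| = (s + d)%N ->
  Delta (esym_on A) (iter d (@raise _) lam) =
  \sum_(S : {set 'I_n} | (S \subset A) && (#|S| == s))
    Delta (esym_on S) lam * subset_weight k A S.
Proof.
move=> lesk; elim: d A => [|d IHd] A cardA.
  rewrite addn0 in cardA; rewrite (bigD1 A) /=; last by rewrite subxx cardA eqxx.
  rewrite subset_weight_id mulr1 big1 ?addr0 // => S.
  case/andP=> /andP[sSA /eqP cardS] neSA.
  by move: neSA; rewrite eqEcard sSA cardS cardA leqnn.
have A0 : A != set0 by rewrite -card_gt0 cardA addnS.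
rewrite /= Delta_raise_esym_on //.
rewrite (eq_bigr (fun i => \sum_(S : {set 'I_n} | (S \subset A :\ i) && (#|S| == s))
    x i ^+ (k - s + #|A|.-1) / lagrange_den A i *
    (Delta (esym_on S) lam * subset_weight k (A :\ i) S))); last first.
  by move=> i iA; rewrite IHd ?mulr_sumr // cardsD1_pred // cardA addnS.
rewrite (exchange_big_dep (fun S => (S \subset A) && (#|S| == s))) /=; last first.
  by move=> i S iA /andP[sSAi ->]; rewrite andbT (subset_trans sSAi) ?subD1set.
apply: eq_bigr => S /andP[sSA /eqP cardS].
have neSA : S != A by apply/eqP => eSA; move: cardA; rewrite -eSA cardS; lia.
under eq_bigr do rewrite mulrCA.
rewrite -mulr_sumr -(sum_subset_weight sSA neSA) ?cardS //; congr (_ * _).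
by apply: eq_bigl => i; rewrite subsetD1 eqxx sSA !inE andbT andbC.
Qed.

End Raising.

Lemma rmorph_Delta (R S : comNzRingType) (f : {rmorphism R -> S}) w (c : nat -> R)
    (lam : w.-tuple nat) :
  f (Delta c lam) = Delta (f \o c) lam.
Proof.
rewrite /Delta -det_map_mx; congr (\det _); apply/matrixP => i j; rewrite !mxE /centry.
by case: ifP => _; [rewrite rmorph0 | case: ifP => _; rewrite ?rmorph1].
Qed.

Lemma eq_Delta (R : comNzRingType) w (c c' : nat -> R) (lam : w.-tuple nat) :
  (forall r, (0 < r)%N -> c r = c' r) -> Delta c lam = Delta c' lam.
Proof.
move=> eqc; congr (\det _); apply/matrixP => i j; rewrite !mxE /centry.
by case: ifP => // _; case: eqP => // /eqP; rewrite -lt0n => /eqc.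
Qed.

Lemma rmorph_mmap (R S T : nzRingType) n (f : R -> S) (h : 'I_n -> S)
    (g : {rmorphism S -> T}) (q : {mpoly R[n]}) :
  g (mmap f h q) = mmap (g \o f) (g \o h) q.
Proof.
rewrite /mmap rmorph_sum; apply: eq_bigr => m _; rewrite rmorphM rmorph_prod.
by congr (_ * _); apply: eq_bigr => i _; rewrite rmorphXn.
Qed.

Lemma eq_mmap (R S : nzRingType) n (f f' : R -> S) (h h' : 'I_n -> S) (q : {mpoly R[n]}) :
  f =1 f' -> h =1 h' -> mmap f h q = mmap f' h' q.
Proof.
move=> eqf eqh; apply: eq_bigr => m _; rewrite eqf.
by congr (_ * _); apply: eq_bigr => i _; rewrite eqh.
Qed.

Notation eval_esym x A := (mmap intr (fun r => esym_on x A r.+1)).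

Section Evaluation.
Variables (K : fieldType) (n : nat) (x : 'I_n -> K).
Hypothesis x_inj : injective x.
Implicit Types (A : {set 'I_n}) (i : 'I_n).
Local Notation esym_on := (esym_on x).
Local Notation lagrange_den := (lagrange_den x).

Lemma eval_esym_cvar m A r : #|A| = m -> (0 < r)%N ->
  eval_esym x A (cvar m r) = esym_on A r.
Proof.
move=> cardA r_gt0; rewrite /cvar raddf_sum /=.
under eq_bigr do rewrite mmapX mmap1U.
have [lerm|ltmr] := leqP r m; last first.
  by rewrite big1 ?esym_on_gt_card ?cardA // => i /eqP ei; move: (ltn_ord i); lia.
have ltr1m : (r.-1 < m)%N by lia.
rewrite (bigD1 (Ordinal ltr1m)) /= ?prednK // big1 ?addr0 ?prednK // => i /andP[/eqP ei].
by rewrite -val_eqE /= -ei eqxx.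
Qed.

Lemma eval_esym_Delta m A w (lam : w.-tuple nat) : #|A| = m ->
  eval_esym x A (Delta (cvar m) lam) = Delta (esym_on A) lam.
Proof.
move=> cardA; rewrite (rmorph_Delta (mmap intr _)); apply: eq_Delta => r r_gt0.
exact: eval_esym_cvar.
Qed.

Lemma eval_esym_raising w m (q : {mpoly int[m]}) (q' : {mpoly int[m.+1]}) A :
  raising_rel w q q' -> #|A| = m.+1 ->
  eval_esym x A q' =
  \sum_(i in A) x i ^+ (w + m) / lagrange_den A i * eval_esym x (A :\ i) q.
Proof.
move=> [L [a [_ [-> ->]]]] cardA.
have A0 : A != set0 by rewrite -card_gt0 cardA.
have cardAi i : i \in A -> #|A :\ i| = m by move=> iA; rewrite cardsD1_pred // cardA.
rewrite raddf_sum /=.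
under eq_bigr => l _ do rewrite mmapZ eval_esym_Delta // Delta_raise_esym_on // mulr_sumr.
rewrite exchange_big cardA /=; apply: eq_bigr => i iA.
rewrite raddf_sum mulr_sumr /=; apply: eq_bigr => l _.
by rewrite mmapZ eval_esym_Delta ?cardAi // mulrCA.
Qed.

Lemma eval_esym_iter_raising k s (lam : (k - s).-tuple nat) (p : forall m, {mpoly int[m]}) :
  p s = Delta (cvar s) lam ->
  (forall m, (s <= m < n)%N -> raising_rel (k - s) (p m) (p m.+1)) ->
  forall d A, #|A| = (s + d)%N ->
  eval_esym x A (p (s + d)%N) = Delta (esym_on A) (iter d (@raise _) lam).
Proof.
move=> ps raising_p; elim=> [|d IHd] A; first by rewrite addn0 ps; exact: eval_esym_Delta.
rewrite addnS => cardA.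
have ltdn : (s + d < n)%N by rewrite -cardA (leq_trans (max_card _)) ?card_ord.
rewrite (eval_esym_raising (raising_p _ _) cardA) ?leq_addr //=.
rewrite Delta_raise_esym_on -?card_gt0 ?cardA //=.
by apply: eq_bigr => i iA; rewrite IHd // cardsD1_pred // cardA.
Qed.

End Evaluation.

Section FractionField.
Variable n : nat.
Local Notation K := {fraction {mpoly int[n]}}.

Definition Xfrac (j : 'I_n) : K := ('X_j : {mpoly int[n]})%:F.

Lemma Xfrac_inj : injective Xfrac.
Proof.
move=> i j /eqP; rewrite tofrac_eq => /eqP /(congr1 (mcoeff U_(j)%MM)).
by rewrite !mcoeffXU eqxx; case: eqP => // _ /eqP; rewrite eq_sym oner_eq0.
Qed.

Lemma tofrac_esymS (S : {set 'I_n}) r : (esymS S r)%:F = esym_on Xfrac S r.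
Proof. by rewrite rmorph_sum; apply: eq_bigr => T _; rewrite rmorph_prod. Qed.

Lemma tofrac_comp_elem (q : {mpoly int[n]}) :
  (q \mPo elem_tuple n)%:F = eval_esym Xfrac setT q.
Proof.
rewrite /comp_mpoly rmorph_mmap; apply: eq_mmap => [c|i] /=.
  by rewrite -[c]intz !rmorph_int.
rewrite tnth_mktuple rmorph_sum; apply: eq_big => [T|T _]; first by rewrite subsetT.
by rewrite rmorph_prod.
Qed.

End FractionField.

Unset Implicit Arguments.

Theorem mainTheorem6 (n k s : nat) (lam : (k - s).-tuple nat)
    (p : forall m : nat, {mpoly int[m]}) :
  (s <= n)%N -> (s <= k)%N -> is_partition lam ->
  p s = Delta (cvar s) lam ->
  (forall m : nat, (s <= m < n)%N -> raising_rel (k - s) (p m) (p m.+1)) ->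
  ((p n \mPo elem_tuple n) %:F : {fraction {mpoly int[n]}}) =
  \sum_(S : {set 'I_n} | #|S| == s)
     (Delta (esymS S) lam) %:F * (\prod_(i in ~: S) 'X_i ^+ k) %:F
       / (\prod_(i in ~: S) \prod_(j in S) ('X_i - 'X_j)) %:F.
Proof.
move=> le_sn le_sk _ ps raising_p.
have cardT : #|[set: 'I_n]| = (s + (n - s))%N by rewrite cardsT card_ord subnKC.
have := eval_esym_iter_raising (@Xfrac_inj n) ps raising_p cardT.
rewrite subnKC // -tofrac_comp_elem => ->.
rewrite (Delta_iter_raise_esym_on (@Xfrac_inj n)) //; apply: eq_big => [S|S _].
  by rewrite subsetT.
rewrite -mulrA /subset_weight setTD rmorph_Delta.
rewrite (eq_Delta _ (fun r _ => tofrac_esymS S r)).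
congr (_ * (_ / _)); rewrite !rmorph_prod; apply: eq_bigr => i _.
  by rewrite rmorphXn.
by rewrite rmorph_prod; apply: eq_bigr => j _; rewrite rmorphB.
Qed.
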